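(* For $n\in\{2,3\}$, in $\mathcal X(GU(n,2),\Phi(n,2))$: (a) The symmetrization, with relations $\mathcal R_0$, $\mathcal R_1\cup\mathcal R_2$, $\mathcal R_3$, $\mathcal R_4\cup\mathcal R_5$ (in this column order), is an association scheme whose character table (rows followed by multiplicities) is, for $n=2$: $(1,2,2,4)$ [1], $(1,-1,2,-2)$ [2], $(1,2,-1,-2)$ [2], $(1,-1,-1,1)$ [4]; and for $n=3$: $(1,2,8,16)$ [1], $(1,-1,-4,4)$ [6], $(1,2,-1,-2)$ [8], $(1,-1,2,-2)$ [12]. (b) The partition with relations $\mathcal R_0$, $\widehat R_1=\mathcal R_1\cup\mathcal R_2$, $\widehat R_2=\mathcal R_3\cup\mathcal R_4\cup\mathcal R_5$ yields a 2-class fusion scheme whose character table (rows followed by multiplicities) is, for $n=2$: $(1,2,6)$ [1], $(1,2,-3)$ [2], $(1,-1,0)$ [6]; and for $n=3$: $(1,2,24)$ [1], $(1,2,-3)$ [8], $(1,-1,0)$ [18].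
   Context: Let $\Phi=\Phi(n,2)=\{x\in\mathbb{F}_4^n\setminus\{0\}:\langle x,x\rangle=0\}$, $\langle x,y\rangle=\sum_kx_ky_k^2$, and $\mathcal X(GU(n,2),\Phi(n,2))$ the association scheme of orbitals of $GU(n,2)$ acting on $\Phi$ by $x\mapsto xU$. Fix a primitive $\alpha\in\mathbb{F}_4$. For $n\in\{2,3\}$ the relations are $\mathcal R_l=\{(x,y)\in\Phi^2:y=\alpha^lx\}$ ($l=0,1,2$) and $\mathcal R_l=\{(x,y)\in\Phi^2:\langle x,y\rangle=\alpha^l\}$ ($l=3,4,5$). A fusion scheme of $\mathcal X$ is an association scheme on the same set each of whose relations is a union of relations of $\mathcal X$; the symmetrization fuses each relation with its converse. Character table: $P=[p_j(i)]$ with $A_j=\sum_ip_j(i)E_i$ over the primitive idempotents $E_i$ ($E_0=\frac1{|\Phi|}J$ first), multiplicity $=\mathrm{rank}\,E_i$; rows are given up to ordering of $E_1,\dots$. *)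

From HB Require Import structures.
From mathcomp Require Import all_boot all_order all_algebra all_field.
Import Order.TTheory GRing.Theory Num.Theory.
Local Open Scope ring_scope.

(* Hermitian form <x,y> = sum_k x_k y_k^2 on F^n (F = F_4, conjugation y |-> y^2). *)
Definition herm (F : finFieldType) (n : nat) (x y : 'rV[F]_n) : F :=
  \sum_(k < n) x 0 k * (y 0 k) ^+ 2.

Definition Phi (F : finFieldType) (n : nat) : {set 'rV[F]_n} :=
  [set x : 'rV[F]_n | (x != 0) && (herm F n x x == 0)].

Definition origR (F : finFieldType) (n : nat) (alpha : F) (l : nat) : rel 'rV[F]_n :=
  fun x y => if (l < 3)%N then y == alpha ^+ l *: x else herm F n x y == alpha ^+ l.

Definition fuse (T : Type) (R : nat -> rel T) (s : seq nat) : rel T :=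
  fun x y => has (fun l => R l x y) s.

Definition is_assoc_scheme (T : finType) (X : {set T}) (d : nat)
  (R : 'I_d.+1 -> rel T) : Prop :=
  [/\
      (forall x y, x \in X -> y \in X -> exists! i, R i x y),
      (forall i, exists x y, [/\ x \in X, y \in X & R i x y]),
      (forall x y, x \in X -> y \in X -> (R ord0 x y <-> x = y)),
      (forall i, exists i', forall x y, x \in X -> y \in X -> R i x y = R i' y x) &
      (forall i j k, exists p : nat, forall x y, x \in X -> y \in X -> R k x y ->
          #|[set z in X | R i x z && R j z y]| = p)].

Definition adjmx (T : finType) (X : {set T}) (R : rel T) : 'M[algC]_#|X| :=
  \matrix_(i, j) ((R (enum_val i) (enum_val j))%:R).

(* P is the character table (P i j = p_j(i)) with multiplicities m:
   E_0..E_d are the primitive idempotents of the Bose-Mesner algebra,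
   E_0 = J/|X|, A_j = sum_i P i j E_i, m_i = rank E_i. *)
Definition is_char_table (T : finType) (X : {set T}) (d : nat)
  (R : 'I_d.+1 -> rel T) (P : 'M[algC]_d.+1) (m : 'I_d.+1 -> nat) : Prop :=
  exists E : 'I_d.+1 -> 'M[algC]_#|X|,
  [/\ (forall i j, E i *m E j = if i == j then E i else 0),
      (forall i, E i != 0),
      \sum_i E i = 1%:M,
      E ord0 = (#|X|%:R)^-1 *: const_mx 1 &
      [/\ (forall i, exists c : 'I_d.+1 -> algC, E i = \sum_j c j *: adjmx T X (R j)),
      (forall j, adjmx T X (R j) = \sum_i P i j *: E i) &
      (forall i, \rank (E i) = m i)]].

Definition mx_of (d : nat) (rows : seq (seq int)) : 'M[algC]_d.+1 :=
  \matrix_(i, j) ((nth 0 (nth [::] rows i) j)%:~R).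

Definition mults (d : nat) (ms : seq nat) : 'I_d.+1 -> nat := fun i => nth 0%N ms i.

Definition symR (F : finFieldType) (n : nat) (alpha : F) : 'I_4 -> rel 'rV[F]_n :=
  fun i => fuse 'rV[F]_n (origR F n alpha) (nth [::] [:: [:: 0%N]; [:: 1%N; 2%N]; [:: 3%N]; [:: 4%N; 5%N]] i).

Definition fusR (F : finFieldType) (n : nat) (alpha : F) : 'I_3 -> rel 'rV[F]_n :=
  fun i => fuse 'rV[F]_n (origR F n alpha) (nth [::] [:: [:: 0%N]; [:: 1%N; 2%N]; [:: 3%N; 4%N; 5%N]] i).

Definition tableA (n : nat) : 'M[algC]_4 :=
  if n == 2%N then mx_of 3 [:: [:: 1; 2; 2; 4]; [:: 1; -1; 2; -2]; [:: 1; 2; -1; -2]; [:: 1; -1; -1; 1]]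
  else mx_of 3 [:: [:: 1; 2; 8; 16]; [:: 1; -1; -4; 4]; [:: 1; 2; -1; -2]; [:: 1; -1; 2; -2]].
Definition multA (n : nat) : 'I_4 -> nat :=
  if n == 2%N then mults 3 [:: 1; 2; 2; 4]%N else mults 3 [:: 1; 6; 8; 12]%N.

Definition tableB (n : nat) : 'M[algC]_3 :=
  if n == 2%N then mx_of 2 [:: [:: 1; 2; 6]; [:: 1; 2; -3]; [:: 1; -1; 0]]
  else mx_of 2 [:: [:: 1; 2; 24]; [:: 1; 2; -3]; [:: 1; -1; 0]].
Definition multB (n : nat) : 'I_3 -> nat :=
  if n == 2%N then mults 2 [:: 1; 2; 6]%N else mults 2 [:: 1; 8; 18]%N.

(** Everything reduces to finite computations.  The field [F] is coded by
   [{0, 1, 2, 3}] through [0, 1, alpha, alpha ^+ 2]; its addition and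
   multiplication tables follow from [alpha ^+ 3 = 1], [alpha ^+ 2 = alpha + 1]
   and characteristic 2.  Vectors of [F^n] are coded by words of length [n], so
   the hermitian form, [Phi] and the relations [R_l] become computable on the 9
   (resp. 27) isotropic words, and the scheme axioms, with their intersection
   numbers [p_ab^k], are checked by evaluation.
   For the character table, [E_i = c^-1 \sum_a Q_ai A_a] where [Q] is an integer
   multiple of the second eigenmatrix.  Since [A_a A_b = \sum_k p_ab^k A_k], the
   relations [E_i E_j = [i == j] E_i], [\sum_i E_i = I], [E_0 = J / |Phi|] and
   [A_j = \sum_i P_ij E_i] reduce to integer identities between [P], [Q] and the
   [p_ab^k], again checked by evaluation; the multiplicities follow from
   [rank E_i = tr E_i] for the idempotents [E_i]. *)

From mathcomp Require Import all_boot all_order all_algebra all_field.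
From mathcomp Require Import ring.
Set Implicit Arguments. Unset Strict Implicit. Unset Printing Implicit Defensive.
Import Order.TTheory GRing.Theory Num.Theory.
Local Open Scope ring_scope.

(* Computational definitions use [nat] numerals explicitly ([%N]): in [ring_scope]
   numerals at type [nat] elaborate to generic ring operations, which makes
   [vm_compute] an order of magnitude slower. *)
Definition f4add (a b : nat) : nat :=
  (nth 0 (nth [::] [:: [:: 0; 1; 2; 3]; [:: 1; 0; 3; 2]; [:: 2; 3; 0; 1]; [:: 3; 2; 1; 0]] a) b)%N.
Definition f4mul (a b : nat) : nat :=
  (nth 0 (nth [::] [:: [:: 0; 0; 0; 0]; [:: 0; 1; 2; 3]; [:: 0; 2; 3; 1]; [:: 0; 3; 1; 2]] a) b)%N.

Lemma f4add_lt a b : (a < 4)%N -> (b < 4)%N -> (f4add a b < 4)%N.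
Proof. by case: a => [|[|[|[|]]]] //; case: b => [|[|[|[|]]]]. Qed.

Lemma f4mul_lt a b : (a < 4)%N -> (b < 4)%N -> (f4mul a b < 4)%N.
Proof. by case: a => [|[|[|[|]]]] //; case: b => [|[|[|[|]]]]. Qed.

Section FieldOfFour.
Variables (F : finFieldType) (alpha : F).
Hypotheses (cardF : #|F| = 4%N) (alpha_prim : 3.-primitive_root alpha).

Lemma pchar2_F4 : 2 \in [pchar F].
Proof. exact: (@card_finPcharP F 2 2 cardF). Qed.

Lemma alpha3 : alpha ^+ 3 = 1.
Proof. exact: prim_expr_order alpha_prim. Qed.

Lemma sqr_alpha : alpha ^+ 2 = alpha + 1.
Proof.
have alpha_neq1 : alpha - 1 != 0.
  by rewrite subr_eq0 -[alpha]expr1 -(expr0 alpha) (eq_prim_root_expr alpha_prim).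
have : (alpha - 1) * (alpha ^+ 2 + alpha + 1) = 0 by ring: alpha3.
move/eqP; rewrite mulf_eq0 (negPf alpha_neq1) /= -addrA addr_eq0 => /eqP ->.
exact: (@oppr_pchar2 _ pchar2_F4).
Qed.

Definition f4val (a : nat) : F := nth 0 [:: 0; 1; alpha; alpha ^+ 2] a.

Lemma f4val_add a b : (a < 4)%N -> (b < 4)%N -> f4val (f4add a b) = f4val a + f4val b.
Proof.
have two0 : (2 : F) = 0 by exact: pcharf0 pchar2_F4.
case: a => [|[|[|[|]]]] //; case: b => [|[|[|[|]]]] // _ _.
all: by rewrite /f4val /=; ring: two0 sqr_alpha.
Qed.

Lemma f4val_mul a b : (a < 4)%N -> (b < 4)%N -> f4val (f4mul a b) = f4val a * f4val b.
Proof.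
case: a => [|[|[|[|]]]] //; case: b => [|[|[|[|]]]] // _ _.
all: by rewrite /f4val /=; ring: alpha3.
Qed.

Lemma uniq_F4 : uniq [:: 0; 1; alpha; alpha ^+ 2].
Proof.
change (uniq (0 :: [seq alpha ^+ k | k <- iota 0 3])).
rewrite cons_uniq map_inj_in_uniq ?iota_uniq ?andbT.
  apply/mapP => -[k _ /esym/eqP].
  by rewrite expf_eq0 (prim_root_eq0 alpha_prim) andbF.
move=> k l; rewrite !mem_iota => /andP[_ k_lt] /andP[_ l_lt] /eqP.
by rewrite (eq_prim_root_expr alpha_prim) !modn_small // => /eqP.
Qed.

Lemma mem_F4 x : x \in [:: 0; 1; alpha; alpha ^+ 2].
Proof.
have [-> | x_neq0] := eqVneq x 0; first by rewrite inE eqxx.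
have : x ^+ 3 = 1.
  by apply: (mulIf x_neq0); rewrite mul1r -exprSr -{2}(expf_card x) cardF.
case/(prim_rootP alpha_prim) => -[[|[|[|]]] //= _] ->;
by rewrite !inE ?expr0 ?expr1 eqxx ?orbT.
Qed.

Definition f4code (x : F) : nat := index x [:: 0; 1; alpha; alpha ^+ 2].

Lemma f4code_lt x : (f4code x < 4)%N.
Proof. by rewrite /f4code index_mem mem_F4. Qed.

Lemma f4codeK x : f4val (f4code x) = x.
Proof. by rewrite /f4val nth_index ?mem_F4. Qed.

Lemma f4val_eq a b : (a < 4)%N -> (b < 4)%N -> (f4val a == f4val b) = (a == b).
Proof. by move=> a_lt b_lt; rewrite nth_uniq ?uniq_F4. Qed.

Lemma f4val_inj a b : (a < 4)%N -> (b < 4)%N -> f4val a = f4val b -> a = b.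
Proof. by move=> a_lt b_lt /eqP; rewrite f4val_eq // => /eqP. Qed.

Lemma f4val_alpha l : f4val (l %% 3)%N.+1 = alpha ^+ l.
Proof.
rewrite -(prim_expr_mod alpha_prim).
by case: (l %% 3)%N (ltn_pmod l (isT : 0 < 3)%N) => [|[|[|]]].
Qed.

End FieldOfFour.

Fixpoint words (n : nat) : seq (seq nat) :=
  if n is n'.+1 then [seq a :: w | a <- iota 0%N 4, w <- words n'] else [:: [::]].

Lemma mem_words n w : (w \in words n) = (size w == n) && all (fun a => a < 4)%N w.
Proof.
elim: n w => [|n IHn] w; first by case: w.
apply/idP/idP => [/allpairsP[[a v] [a_in v_in ->]] | ].
  change (is_true (a \in iota 0 4)) in a_in; change (is_true (v \in words n)) in v_in.
  by move: a_in v_in; rewrite mem_iota IHn /= eqSS => a_lt /andP[-> ->]; rewrite a_lt.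
case: w => // a w /and3P[size_w a_lt w_lt].
apply: allpairs_f; first by rewrite mem_iota.
by rewrite IHn; apply/andP; split.
Qed.

Lemma size_words n w : w \in words n -> size w = n.
Proof. by rewrite mem_words => /andP[/eqP]. Qed.

Lemma all_words n w : w \in words n -> all (fun a => a < 4)%N w.
Proof. by rewrite mem_words => /andP[]. Qed.

Lemma nth_words_lt n w i : w \in words n -> (nth 0 w i < 4)%N.
Proof.
move/all_words/allP => w_lt.
by case: (ltnP i (size w)) => [i_lt | i_ge]; [exact/w_lt/mem_nth | rewrite nth_default].
Qed.

Lemma uniq_words n : uniq (words n).
Proof.
elim: n => [|n IHn] //; apply: allpairs_uniq => //.
by move=> [a v] [b w] _ _ [-> ->].
Qed.

Section Coordinates.
Variables (F : finFieldType) (alpha : F) (n : nat).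
Hypotheses (cardF : #|F| = 4%N) (alpha_prim : 3.-primitive_root alpha).
Local Notation f4val := (f4val alpha).
Local Notation f4code := (f4code alpha).

Definition vec_of (w : seq nat) : 'rV[F]_n := \row_i f4val (nth 0 w i).

Definition word_of (v : 'rV[F]_n) : seq nat := [seq f4code (v 0 i) | i <- enum 'I_n].

Lemma word_of_words v : word_of v \in words n.
Proof.
rewrite mem_words size_map size_enum_ord eqxx.
by apply/allP => _ /mapP[i _ ->]; exact: f4code_lt.
Qed.

Lemma word_ofK : cancel word_of vec_of.
Proof.
move=> v; apply/rowP => i.
by rewrite mxE (nth_map i) ?size_enum_ord // nth_ord_enum (f4codeK cardF alpha_prim).
Qed.

Lemma vec_ofK : {in words n, cancel vec_of word_of}.
Proof.
move=> w w_in; rewrite /word_of -[RHS](mkseq_nth 0) (size_words w_in) /mkseq.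
rewrite -val_enum_ord -map_comp.
apply: eq_map => i /=; rewrite mxE.
apply: (f4val_inj alpha_prim); rewrite ?f4code_lt ?(nth_words_lt _ w_in) //.
exact: f4codeK.
Qed.

Lemma vec_of_inj : {in words n &, injective vec_of}.
Proof. exact: can_in_inj vec_ofK. Qed.

Lemma card_vec_of (A : {pred 'rV[F]_n}) : #|A| = count (fun w => vec_of w \in A) (words n).
Proof.
have uniq_vecs : uniq [seq vec_of w | w <- words n].
  by rewrite (map_inj_in_uniq vec_of_inj) uniq_words.
rewrite -(count_map _ (mem A)) -size_filter -(card_uniqP (filter_uniq _ uniq_vecs)).
apply: eq_card => v; rewrite mem_filter -[v in v \in map _ _]word_ofK.
by rewrite map_f ?word_of_words ?andbT.
Qed.

End Coordinates.

Fixpoint hermw (u w : seq nat) : nat :=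
  match u, w with
  | a :: u', b :: w' => f4add (f4mul a (f4mul b b)) (hermw u' w')
  | _, _ => 0%N
  end.

Lemma hermw_lt u w : all (fun a => a < 4)%N u -> all (fun a => a < 4)%N w -> (hermw u w < 4)%N.
Proof.
elim: u w => [|a u IHu] [|b w] //= /andP[a_lt u_lt] /andP[b_lt w_lt].
by rewrite f4add_lt ?f4mul_lt ?IHu.
Qed.

Definition isotropicw (w : seq nat) : bool := has (fun a => a != 0)%N w && (hermw w w == 0)%N.

(* [alpha ^+ l] has code [(l %% 3).+1]. *)
Definition origRw (l : nat) (u w : seq nat) : bool :=
  if (l < 3)%N then w == map (f4mul (l %% 3)%N.+1) u else hermw u w == (l %% 3)%N.+1.

Section CodedRelations.
Variables (F : finFieldType) (alpha : F) (n : nat).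
Hypotheses (cardF : #|F| = 4%N) (alpha_prim : 3.-primitive_root alpha).
Local Notation f4val := (f4val alpha).
Local Notation vec_of := (@vec_of F alpha n).

Lemma sum_hermw m u w : size u = m -> size w = m ->
    all (fun a => a < 4)%N u -> all (fun a => a < 4)%N w ->
  \sum_(k < m) f4val (nth 0 u k) * f4val (nth 0 w k) ^+ 2 = f4val (hermw u w).
Proof.
elim: u m w => [|a u IHu] m [|b w] /= <- //; first by rewrite big_ord0.
move=> [size_uw] /andP[a_lt u_lt] /andP[b_lt w_lt].
rewrite big_ord_recl /= IHu // f4val_add ?f4mul_lt ?hermw_lt //.
by rewrite !f4val_mul ?f4mul_lt // expr2.
Qed.

Lemma herm_vec_of u w : u \in words n -> w \in words n ->
  herm F n (vec_of u) (vec_of w) = f4val (hermw u w).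
Proof.
move=> u_in w_in; rewrite /herm -(sum_hermw (size_words u_in) (size_words w_in)
  (all_words u_in) (all_words w_in)).
by apply: eq_bigr => k _; rewrite !mxE.
Qed.

Lemma vec_of_eq0 w : w \in words n -> (vec_of w == 0) = ~~ has (fun a => a != 0)%N w.
Proof.
move=> w_in; have nseq0_in : nseq n 0%N \in words n.
  by rewrite mem_words size_nseq eqxx; apply/allP => a /nseqP[->].
have -> : 0 = vec_of (nseq n 0%N) by apply/rowP => i; rewrite !mxE nth_nseq if_same.
rewrite (inj_in_eq (vec_of_inj cardF alpha_prim)) // has_predC negbK.
by rewrite -(size_words w_in); apply/eqP/all_pred1P.
Qed.

Lemma mem_Phi_vec_of w : w \in words n -> (vec_of w \in Phi F n) = isotropicw w.
Proof.
move=> w_in; rewrite inE vec_of_eq0 // negbK herm_vec_of //.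
by rewrite -[0 in LHS]/(f4val 0) f4val_eq ?hermw_lt ?(all_words w_in).
Qed.

Lemma origR_vec_of l u w : u \in words n -> w \in words n ->
  origR F n alpha l (vec_of u) (vec_of w) = origRw l u w.
Proof.
move=> u_in w_in; rewrite /origR /origRw -(f4val_alpha alpha_prim).
have c_lt : ((l %% 3)%N.+1 < 4)%N by rewrite ltnS ltn_pmod.
case: ifP => _; last first.
  by rewrite herm_vec_of // f4val_eq ?hermw_lt ?(all_words u_in) ?(all_words w_in).
have cu_in : map (f4mul (l %% 3)%N.+1) u \in words n.
  move: u_in; rewrite !mem_words size_map => /andP[-> /allP u_lt].
  by apply/allP => _ /mapP[a a_in ->]; apply: f4mul_lt => //; exact: u_lt.
have -> : f4val (l %% 3)%N.+1 *: vec_of u = vec_of (map (f4mul (l %% 3)%N.+1) u).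
  apply/rowP => i; rewrite !mxE (nth_map 0%N) ?(size_words u_in) //.
  by rewrite f4val_mul // (nth_words_lt _ u_in).
by rewrite (inj_in_eq (vec_of_inj cardF alpha_prim)).
Qed.

Lemma fuse_vec_of s u w : u \in words n -> w \in words n ->
  fuse _ (origR F n alpha) s (vec_of u) (vec_of w) = has (fun l => origRw l u w) s.
Proof. by move=> u_in w_in; apply: eq_has => l; rewrite origR_vec_of. Qed.

End CodedRelations.

Lemma mxrank_idempotent (K : fieldType) n (E : 'M[K]_n) :
  E *m E = E -> (\rank E)%:R = \tr E.
Proof.
move=> idemE; have := mulmx_base E; have := col_base_full E; have := row_base_free E.
move: (col_base E) (row_base E) => C D D_free C_full CD_E.
have DC1 : D *m C = 1%:M.
  apply: (row_free_inj D_free); apply: (row_full_inj C_full).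
  by rewrite mul1mx !mulmxA CD_E -mulmxA CD_E idemE.
by rewrite -[in RHS]CD_E mxtrace_mulC DC1 mxtrace1.
Qed.

Section BoseMesner.
Variables (T : finType) (X : {set T}) (d : nat) (R : 'I_d.+1 -> rel T).
Hypothesis R_partition : forall x y, x \in X -> y \in X -> exists! i, R i x y.
Hypothesis R0_diag : forall x y, x \in X -> y \in X -> (R ord0 x y <-> x = y).
Variable p : nat -> nat -> nat -> nat.
Hypothesis R_intersection : forall (i j k : 'I_d.+1) x y, x \in X -> y \in X -> R k x y ->
  #|[set z in X | R i x z && R j z y]| = p i j k.

Local Notation N := #|X|.
Local Notation A i := (adjmx T X (R i)).

Definition combmx (f : 'I_d.+1 -> algC) : 'M[algC]_N := \sum_a f a *: A a.

Lemma eq_combmx f g : f =1 g -> combmx f = combmx g.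
Proof. by move=> eq_fg; apply: eq_bigr => a _; rewrite eq_fg. Qed.

Lemma combmx_entry f (r s : 'I_N) k : R k (enum_val r) (enum_val s) ->
  combmx f r s = f k.
Proof.
move=> Rk; have [k0 [_ uniq_k0]] := R_partition (enum_valP r) (enum_valP s).
have Ri_k i : R i (enum_val r) (enum_val s) = (i == k).
  by apply/idP/eqP => [/uniq_k0 <- | ->] //; exact: uniq_k0.
rewrite summxE (bigD1 k) //= big1 => [|i /negPf i_neq_k]; rewrite !mxE Ri_k ?eqxx ?i_neq_k.
  by rewrite mulr1 addr0.
by rewrite mulr0.
Qed.

Lemma relation_exists x y : x \in X -> y \in X -> exists k, R k x y.
Proof. by move=> x_in y_in; have [k [Rk _]] := R_partition x_in y_in; exists k. Qed.

Lemma sum_indicator_enum_val (P : pred T) :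
  \sum_(t < N) (P (enum_val t) : nat)%:R = #|[set z in X | P z]|%:R :> algC.
Proof.
rewrite -(big_enum_val (fun z => (P z : nat)%:R)) -natr_sum; congr _%:R.
rewrite -sum1_card [LHS]big_mkcond [RHS]big_mkcond /=.
by apply: eq_bigr => z _; rewrite inE; case: (z \in X); case: (P z).
Qed.

Lemma adjmx_mul a b : A a *m A b = combmx (fun k => (p a b k)%:R).
Proof.
apply/matrixP => r s; have [k Rk] := relation_exists (enum_valP r) (enum_valP s).
rewrite (combmx_entry _ Rk) !mxE; under eq_bigr => t _ do rewrite !mxE -natrM mulnb.
by rewrite (sum_indicator_enum_val (fun z => R a (enum_val r) z && R b z (enum_val s)))
  (R_intersection _ _ (enum_valP r) (enum_valP s) Rk).
Qed.

Lemma combmx_mul f g :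
  combmx f *m combmx g = combmx (fun k => \sum_a \sum_b f a * g b * (p a b k)%:R).
Proof.
rewrite /combmx mulmx_suml; under eq_bigr => a _ do rewrite mulmx_sumr.
under eq_bigr => a _ do under eq_bigr => b _ do
  rewrite -scalemxAl -scalemxAr scalerA adjmx_mul /combmx scaler_sumr.
under eq_bigr => a _ do rewrite exchange_big /=.
rewrite exchange_big /=; apply: eq_bigr => k _.
rewrite scaler_suml; apply: eq_bigr => a _.
by rewrite scaler_suml; apply: eq_bigr => b _; rewrite scalerA.
Qed.

Lemma combmx0 : combmx (fun=> 0) = 0.
Proof. by rewrite /combmx big1 // => a _; rewrite scale0r. Qed.

Lemma combmx_delta j : combmx (fun a => (a == j)%:R) = A j.
Proof.
rewrite /combmx (bigD1 j) //= eqxx scale1r big1 ?addr0 // => a /negPf ->.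
by rewrite scale0r.
Qed.

Lemma scale_combmx s f : s *: combmx f = combmx (fun a => s * f a).
Proof. by rewrite /combmx scaler_sumr; apply: eq_bigr => a _; rewrite scalerA. Qed.

Lemma sum_combmx (I : finType) (f : I -> 'I_d.+1 -> algC) :
  \sum_i combmx (f i) = combmx (fun a => \sum_i f i a).
Proof.
by rewrite /combmx exchange_big; apply: eq_bigr => a _; rewrite scaler_suml.
Qed.

Lemma adjmx0 : A ord0 = 1%:M.
Proof.
apply/matrixP => r s; rewrite !mxE -(inj_eq enum_val_inj).
have R0_eq := R0_diag (enum_valP r) (enum_valP s).
suff -> : R ord0 (enum_val r) (enum_val s) = (enum_val r == enum_val s) by [].
by apply/idP/eqP => /R0_eq.
Qed.

Lemma const1_combmx : const_mx 1 = combmx (fun=> 1).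
Proof.
apply/matrixP => r s; have [k Rk] := relation_exists (enum_valP r) (enum_valP s).
by rewrite (combmx_entry _ Rk) mxE.
Qed.

Lemma mxtrace_combmx f : \tr (combmx f) = f ord0 *+ N.
Proof.
rewrite /mxtrace -[in RHS](card_ord N) -sumr_const; apply: eq_bigr => r _.
by apply: combmx_entry; apply/R0_diag => //; exact: enum_valP.
Qed.

(* [Q] is [c] times the dual eigenmatrix: [E_i = c^-1 \sum_a Q a i A_a]. *)
Variables (Q : 'I_d.+1 -> 'I_d.+1 -> algC) (P : 'M[algC]_d.+1) (c : algC)
  (m : 'I_d.+1 -> nat).
Hypothesis c_neq0 : c != 0.
Hypothesis Q_idem : forall i j k : 'I_d.+1,
  \sum_a \sum_b Q a i * Q b j * (p a b k)%:R = if i == j then c * Q k i else 0.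
Hypothesis Q_sum : forall a, \sum_i Q a i = if a == ord0 then c else 0.
Hypothesis Q_col0 : forall a, Q a ord0 * N%:R = c.
Hypothesis Q_row0 : forall i, Q ord0 i * N%:R = c * (m i)%:R.
Hypothesis PQ : forall a j, \sum_i P i j * Q a i = if a == j then c else 0.
Hypothesis m_gt0 : forall i, (0 < m i)%N.

Definition idem i := combmx (fun a => c^-1 * Q a i).

Lemma idem_mul i j : idem i *m idem j = if i == j then idem i else 0.
Proof.
have -> : (if i == j then idem i else 0) =
    combmx (fun k => if i == j then c^-1 * Q k i else 0).
  by case: eqP => _; rewrite ?combmx0.
rewrite combmx_mul; apply: eq_combmx => k.
transitivity (c^-1 * c^-1 * \sum_a \sum_b Q a i * Q b j * (p a b k)%:R).
  rewrite mulr_sumr; apply: eq_bigr => a _; rewrite mulr_sumr.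
  by apply: eq_bigr => b _; ring.
by rewrite Q_idem; case: eqP => _; [field | rewrite mulr0].
Qed.

Lemma rank_idem i : \rank (idem i) = m i.
Proof.
apply/eqP; rewrite -(eqr_nat algC) mxrank_idempotent; last by rewrite idem_mul eqxx.
by rewrite mxtrace_combmx -[X in X == _]mulr_natr -mulrA Q_row0; apply/eqP; field.
Qed.

Lemma sum_idem : \sum_i idem i = 1%:M.
Proof.
rewrite sum_combmx -adjmx0 -combmx_delta; apply: eq_combmx => a.
by rewrite -mulr_sumr Q_sum; case: eqP => _; [rewrite mulVf | rewrite mulr0].
Qed.

Lemma idem0 : idem ord0 = N%:R^-1 *: const_mx 1.
Proof.
have N_neq0 : N%:R != 0 :> algC.
  by apply: contra_neq c_neq0 => N0; rewrite -(Q_col0 ord0) N0 mulr0.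
rewrite const1_combmx scale_combmx; apply: eq_combmx => a.
by rewrite mulr1; apply: (mulIf N_neq0); rewrite -mulrA Q_col0 !mulVf.
Qed.

Lemma adjmx_idem j : A j = \sum_i P i j *: idem i.
Proof.
under eq_bigr => i _ do rewrite scale_combmx.
rewrite sum_combmx -combmx_delta; apply: eq_combmx => a.
transitivity (c^-1 * \sum_i P i j * Q a i); last first.
  by rewrite mulr_sumr; apply: eq_bigr => i _; ring.
by rewrite PQ; case: eqP => _; [rewrite mulVf | rewrite mulr0].
Qed.

Lemma char_table_of_idempotents : is_char_table T X d R P m.
Proof.
exists idem; split.
- exact: idem_mul.
- by move=> i; apply/eqP => idem_i0; have := m_gt0 i; rewrite -rank_idem idem_i0 mxrank0.
- exact: sum_idem.
- exact: idem0.
- split; [by move=> i; exists (fun a => c^-1 * Q a i) | exact: adjmx_idem | exact: rank_idem].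
Qed.

End BoseMesner.

Lemma mem_iota_ord m (i : 'I_m) : (i : nat) \in iota 0 m.
Proof. by rewrite mem_iota ltn_ord. Qed.

Definition isowords (n : nat) : seq (seq nat) := [seq w <- words n | isotropicw w].

Section SchemeChecks.
Variables (V : seq (seq nat)) (d : nat) (Rw : nat -> rel (seq nat)).
Variable pK : nat -> nat -> nat -> nat.
Local Notation classes := (iota 0%N d.+1).

Definition classw (u w : seq nat) : nat := find (fun i => Rw i u w) classes.

Definition partitionb : bool := all2rel (fun u w =>
  (classw u w < d.+1)%N && all (fun i => Rw i u w == (i == classw u w)) classes) V.
Definition diagb : bool := all2rel (fun u w => Rw 0%N u w == (u == w)) V.
Definition symb : bool := all2rel (fun u w => all (fun i => Rw i u w == Rw i w u) classes) V.
Definition nonemptyb : bool := all (fun i => has (fun u => has (Rw i u) V) V) classes.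
Definition intersectionb : bool := all2rel (fun u w => all (fun i => all (fun j =>
  count (fun v => Rw i u v && Rw j v w) V == pK i j (classw u w)) classes) classes) V.

Definition schemeb : bool := [&& partitionb, diagb, symb, nonemptyb & intersectionb].

End SchemeChecks.

Definition sum_upto (f : nat -> int) (k : nat) : int := foldr (fun i s => f i + s) 0 (iota 0%N k).

Lemma intr_sum_upto f k : (sum_upto f k)%:~R = \sum_(i < k) (f i)%:~R :> algC.
Proof.
rewrite -(big_mkord xpredT (fun i => (f i)%:~R)) /index_iota subn0 /sum_upto.
by elim: (iota 0 k) => [|i s IHs]; rewrite ?big_nil ?rmorph0 // big_cons -IHs -rmorphD.
Qed.

Definition entry2 (rows : seq (seq int)) (i j : nat) : int := nth 0 (nth [::] rows i) j.

Section NumericChecks.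
Variables (d : nat) (p : nat -> nat -> nat -> nat) (Qrows Prows : seq (seq int)).
Variables (c N : nat) (ms : seq nat).
Local Notation idx := (iota 0%N d.+1).
Local Notation Qz := (entry2 Qrows).
Local Notation Pz := (entry2 Prows).

Definition numericb : bool := [&&
  all (fun i => all (fun j => all (fun k =>
    sum_upto (fun a => sum_upto (fun b => Qz a i * Qz b j * (p a b k)%:Z) d.+1) d.+1
    == (if i == j then c%:Z * Qz k i else 0)) idx) idx) idx,
  all (fun a => sum_upto (Qz a) d.+1 == (if a == 0%N then c%:Z else 0)) idx,
  all (fun a => Qz a 0 * N%:Z == c%:Z) idx,
  all (fun i => Qz 0 i * N%:Z == (c * nth 0 ms i)%N%:Z) idx,
  all (fun a => all (fun j =>
    sum_upto (fun i => Pz i j * Qz a i) d.+1 == (if a == j then c%:Z else 0)) idx) idx,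
  all (fun i => 0 < nth 0 ms i)%N idx
  & (0 < c)%N].

Hypothesis numeric_ok : numericb.
Local Notation Q a i := ((Qz a i)%:~R : algC).
Local Notation intr := (fun z : int => z%:~R : algC).

Lemma numeric_idem (i j k : 'I_d.+1) :
  \sum_(a < d.+1) \sum_(b < d.+1) Q a i * Q b j * (p a b k)%:R =
  if i == j then c%:R * Q k i else 0.
Proof.
case/and5P: numeric_ok => /allP/(_ _ (mem_iota_ord i))/allP/(_ _ (mem_iota_ord j)).
move=> /allP/(_ _ (mem_iota_ord k))/eqP/(congr1 intr) + _ _ _ _.
rewrite intr_sum_upto (fun_if intr) rmorphM /= rmorph0 -pmulrn => <-.
apply: eq_bigr => a _; rewrite intr_sum_upto; apply: eq_bigr => b _.
by rewrite !rmorphM /= -pmulrn.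
Qed.

Lemma numeric_sum (a : 'I_d.+1) : \sum_(i < d.+1) Q a i = if a == ord0 then c%:R else 0.
Proof.
case/and5P: numeric_ok => _ /allP/(_ _ (mem_iota_ord a))/eqP/(congr1 intr) + _ _ _.
by rewrite intr_sum_upto (fun_if intr) /= rmorph0 -pmulrn.
Qed.

Lemma numeric_col0 (a : 'I_d.+1) : Q a (@ord0 d) * N%:R = c%:R.
Proof.
case/and5P: numeric_ok => _ _ /allP/(_ _ (mem_iota_ord a))/eqP/(congr1 intr) + _ _.
by rewrite rmorphM /= -!pmulrn.
Qed.

Lemma numeric_row0 (i : 'I_d.+1) : Q (@ord0 d) i * N%:R = c%:R * (mults d ms i)%:R.
Proof.
case/and5P: numeric_ok => _ _ _ /allP/(_ _ (mem_iota_ord i))/eqP/(congr1 intr) + _.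
by rewrite rmorphM /= -!pmulrn natrM.
Qed.

Lemma numeric_PQ (a j : 'I_d.+1) :
  \sum_(i < d.+1) mx_of d Prows i j * Q a i = if a == j then c%:R else 0.
Proof.
case/and5P: numeric_ok => _ _ _ _ /and3P[/allP/(_ _ (mem_iota_ord a))].
move=> /allP/(_ _ (mem_iota_ord j))/eqP/(congr1 intr) + _ _.
rewrite intr_sum_upto (fun_if intr) /= rmorph0 -pmulrn => <-.
by apply: eq_bigr => i _; rewrite mxE rmorphM.
Qed.

Lemma numeric_mults_gt0 (i : 'I_d.+1) : (0 < mults d ms i)%N.
Proof.
by case/and5P: numeric_ok => _ _ _ _ /and3P[_ /allP m_ok _]; exact: m_ok (mem_iota_ord i).
Qed.

Lemma numeric_c_neq0 : c%:R != 0 :> algC.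
Proof. by case/and5P: numeric_ok => _ _ _ _ /and3P[_ _]; rewrite pnatr_eq0 -lt0n. Qed.

End NumericChecks.

Section SchemeOfChecks.
Variables (F : finFieldType) (alpha : F) (n d : nat).
Hypotheses (cardF : #|F| = 4%N) (alpha_prim : 3.-primitive_root alpha).
Variables (R : 'I_d.+1 -> rel 'rV[F]_n) (Rw : nat -> rel (seq nat)).
Variable pK : nat -> nat -> nat -> nat.
Hypothesis R_vec_of : forall (i : 'I_d.+1) u w, u \in words n -> w \in words n ->
  R i (vec_of alpha n u) (vec_of alpha n w) = Rw i u w.
Hypothesis checks : schemeb (isowords n) d Rw pK.
Local Notation vec_of := (vec_of alpha n).
Local Notation V := (isowords n).

Lemma isowords_words u : u \in V -> u \in words n.
Proof. by rewrite mem_filter => /andP[]. Qed.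

Lemma mem_isowords u : u \in words n -> (u \in V) = (vec_of u \in Phi F n).
Proof. by move=> u_in; rewrite mem_filter u_in andbT mem_Phi_vec_of. Qed.

Lemma PhiP x : x \in Phi F n -> exists2 u, u \in V & vec_of u = x.
Proof.
rewrite -[x](word_ofK cardF alpha_prim) => x_in; exists (word_of alpha x) => //.
by rewrite mem_isowords // word_of_words.
Qed.

Lemma card_Phi : #|Phi F n| = size V.
Proof.
rewrite (card_vec_of cardF alpha_prim) size_filter.
by apply: eq_in_count => u u_in; exact: mem_Phi_vec_of.
Qed.

Lemma R_isowords (i : 'I_d.+1) u w : u \in V -> w \in V ->
  R i (vec_of u) (vec_of w) = Rw i u w.
Proof. by move=> /isowords_words u_in /isowords_words w_in; exact: R_vec_of. Qed.

Lemma classwP u w : u \in V -> w \in V -> (classw d Rw u w < d.+1)%N /\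
  forall i : 'I_d.+1, R i (vec_of u) (vec_of w) = (i == classw d Rw u w :> nat).
Proof.
move=> u_in w_in; case/and5P: checks => /allrelP/(_ u w u_in w_in)/andP[lt_class].
move=> /allP Rw_class _ _ _ _; split=> // i.
by rewrite R_isowords //; apply/eqP/Rw_class/mem_iota_ord.
Qed.

Lemma classw_R (k : 'I_d.+1) u w : u \in V -> w \in V -> R k (vec_of u) (vec_of w) ->
  classw d Rw u w = k.
Proof. by move=> u_in w_in; have [_ ->] := classwP u_in w_in => /eqP. Qed.

Lemma scheme_partition x y : x \in Phi F n -> y \in Phi F n -> exists! i, R i x y.
Proof.
move=> /PhiP[u u_in <-] /PhiP[w w_in <-]; have [lt_class R_class] := classwP u_in w_in.
exists (Ordinal lt_class); split=> [|i]; first by rewrite R_class.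
by rewrite R_class => /eqP i_class; apply: val_inj.
Qed.

Lemma scheme_diag x y : x \in Phi F n -> y \in Phi F n -> (R ord0 x y <-> x = y).
Proof.
move=> /PhiP[u u_in <-] /PhiP[w w_in <-]; rewrite R_isowords //.
case/and5P: checks => _ /allrelP/(_ u w u_in w_in)/eqP -> _ _ _.
have vec_of_uw := vec_of_inj cardF alpha_prim (isowords_words u_in) (isowords_words w_in).
by split=> [/eqP -> | /vec_of_uw ->].
Qed.

Lemma scheme_sym (i : 'I_d.+1) x y : x \in Phi F n -> y \in Phi F n -> R i x y = R i y x.
Proof.
move=> /PhiP[u u_in <-] /PhiP[w w_in <-]; rewrite !R_isowords //.
case/and5P: checks => _ _ /allrelP/(_ u w u_in w_in)/allP Rw_sym _ _.
exact/eqP/Rw_sym/mem_iota_ord.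
Qed.

Lemma scheme_nonempty (i : 'I_d.+1) :
  exists x y, [/\ x \in Phi F n, y \in Phi F n & R i x y].
Proof.
case/and5P: checks => _ _ _ /allP/(_ _ (mem_iota_ord i)) + _.
case/hasP=> u u_in /hasP[w w_in Rw_uw]; exists (vec_of u), (vec_of w).
by rewrite -!mem_isowords ?isowords_words ?R_isowords.
Qed.

Lemma scheme_intersection (i j k : 'I_d.+1) x y : x \in Phi F n -> y \in Phi F n ->
  R k x y -> #|[set z in Phi F n | R i x z && R j z y]| = pK i j k.
Proof.
move=> /PhiP[u u_in <-] /PhiP[w w_in <-] /classw_R <- //.
case/and5P: checks => _ _ _ _ /allrelP/(_ u w u_in w_in).
move/allP/(_ _ (mem_iota_ord i))/allP/(_ _ (mem_iota_ord j))/eqP <-.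
rewrite (card_vec_of cardF alpha_prim) /isowords count_filter.
apply: eq_in_count => v v_in; rewrite inE (mem_Phi_vec_of cardF alpha_prim v_in).
by rewrite (R_vec_of i (isowords_words u_in) v_in) (R_vec_of j v_in (isowords_words w_in)) andbC.
Qed.

Lemma assoc_scheme_of_checks : is_assoc_scheme _ (Phi F n) d R.
Proof.
split.
- exact: scheme_partition.
- exact: scheme_nonempty.
- exact: scheme_diag.
- by move=> i; exists i => x y x_in y_in; rewrite scheme_sym.
- by move=> i j k; exists (pK i j k) => x y; exact: scheme_intersection.
Qed.

Variables (Qrows Prows : seq (seq int)) (c : nat) (ms : seq nat).
Hypothesis numeric_ok : numericb d pK Qrows Prows c (size V) ms.

Lemma char_table_of_checks : is_char_table _ (Phi F n) d R (mx_of d Prows) (mults d ms).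
Proof.
have N_eq := card_Phi.
apply: (char_table_of_idempotents scheme_partition scheme_diag scheme_intersection
  (Q := fun a i => (entry2 Qrows a i)%:~R) (c := c%:R)).
- exact: numeric_c_neq0 numeric_ok.
- exact: numeric_idem numeric_ok.
- exact: numeric_sum numeric_ok.
- by move=> a; rewrite N_eq; exact: (numeric_col0 numeric_ok a).
- by move=> i; rewrite N_eq; exact: (numeric_row0 numeric_ok i).
- exact: numeric_PQ numeric_ok.
- exact: numeric_mults_gt0 numeric_ok.
Qed.

End SchemeOfChecks.

Definition entry3 (t : seq (seq (seq nat))) (i j k : nat) : nat :=
  nth 0%N (nth [::] (nth [::] t i) j) k.

Definition symw (i : nat) : rel (seq nat) := fun u w =>
  has (fun l => origRw l u w) (nth [::] [:: [:: 0%N]; [:: 1%N; 2%N]; [:: 3%N]; [:: 4%N; 5%N]] i).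
Definition fusw (i : nat) : rel (seq nat) := fun u w =>
  has (fun l => origRw l u w) (nth [::] [:: [:: 0%N]; [:: 1%N; 2%N]; [:: 3%N; 4%N; 5%N]] i).

Definition intersectionA (n : nat) : seq (seq (seq nat)) :=
  if n == 2%N then
    [:: [:: [:: 1; 0; 0; 0]; [:: 0; 1; 0; 0]; [:: 0; 0; 1; 0]; [:: 0; 0; 0; 1]];
        [:: [:: 0; 1; 0; 0]; [:: 2; 1; 0; 0]; [:: 0; 0; 0; 1]; [:: 0; 0; 2; 1]];
        [:: [:: 0; 0; 1; 0]; [:: 0; 0; 0; 1]; [:: 2; 0; 1; 0]; [:: 0; 2; 0; 1]];
        [:: [:: 0; 0; 0; 1]; [:: 0; 0; 2; 1]; [:: 0; 2; 0; 1]; [:: 4; 2; 2; 1]]]%N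
  else
    [:: [:: [:: 1; 0; 0; 0]; [:: 0; 1; 0; 0]; [:: 0; 0; 1; 0]; [:: 0; 0; 0; 1]];
        [:: [:: 0; 1; 0; 0]; [:: 2; 1; 0; 0]; [:: 0; 0; 0; 1]; [:: 0; 0; 2; 1]];
        [:: [:: 0; 0; 1; 0]; [:: 0; 0; 0; 1]; [:: 8; 0; 1; 3]; [:: 0; 8; 6; 4]];
        [:: [:: 0; 0; 0; 1]; [:: 0; 0; 2; 1]; [:: 0; 8; 6; 4]; [:: 16; 8; 8; 10]]]%N.

Definition intersectionB (n : nat) : seq (seq (seq nat)) :=
  if n == 2%N then
    [:: [:: [:: 1; 0; 0]; [:: 0; 1; 0]; [:: 0; 0; 1]];
        [:: [:: 0; 1; 0]; [:: 2; 1; 0]; [:: 0; 0; 2]];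
        [:: [:: 0; 0; 1]; [:: 0; 0; 2]; [:: 6; 6; 3]]]%N
  else
    [:: [:: [:: 1; 0; 0]; [:: 0; 1; 0]; [:: 0; 0; 1]];
        [:: [:: 0; 1; 0]; [:: 2; 1; 0]; [:: 0; 0; 2]];
        [:: [:: 0; 0; 1]; [:: 0; 0; 2]; [:: 24; 24; 21]]]%N.

(* Twice the second eigenmatrix [|Phi| P^-1], whose entries are half-integers for
   [n = 3]; hence [c = 2 |Phi|] below. *)
Definition dualA (n : nat) : seq (seq int) :=
  if n == 2%N then [:: [:: 2; 4; 4; 8]; [:: 2; -2; 4; -4]; [:: 2; 4; -2; -4]; [:: 2; -2; -2; 2]]
  else [:: [:: 2; 12; 16; 24]; [:: 2; -6; 16; -12]; [:: 2; -6; -2; 6]; [:: 2; 3; -2; -3]].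

Definition dualB (n : nat) : seq (seq int) :=
  if n == 2%N then [:: [:: 2; 4; 12]; [:: 2; 4; -6]; [:: 2; -2; 0]]
  else [:: [:: 2; 16; 36]; [:: 2; 16; -18]; [:: 2; -2; 0]].

Definition rowsA (n : nat) : seq (seq int) :=
  if n == 2%N then [:: [:: 1; 2; 2; 4]; [:: 1; -1; 2; -2]; [:: 1; 2; -1; -2]; [:: 1; -1; -1; 1]]
  else [:: [:: 1; 2; 8; 16]; [:: 1; -1; -4; 4]; [:: 1; 2; -1; -2]; [:: 1; -1; 2; -2]].
Definition multsA (n : nat) : seq nat :=
  if n == 2%N then [:: 1; 2; 2; 4]%N else [:: 1; 6; 8; 12]%N.

Definition rowsB (n : nat) : seq (seq int) :=
  if n == 2%N then [:: [:: 1; 2; 6]; [:: 1; 2; -3]; [:: 1; -1; 0]]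
  else [:: [:: 1; 2; 24]; [:: 1; 2; -3]; [:: 1; -1; 0]].
Definition multsB (n : nat) : seq nat :=
  if n == 2%N then [:: 1; 2; 6]%N else [:: 1; 8; 18]%N.

Lemma tableAE n : tableA n = mx_of 3 (rowsA n).
Proof. by rewrite /tableA /rowsA; case: (n == 2%N). Qed.
Lemma multAE n : multA n = mults 3 (multsA n).
Proof. by rewrite /multA /multsA; case: (n == 2%N). Qed.
Lemma tableBE n : tableB n = mx_of 2 (rowsB n).
Proof. by rewrite /tableB /rowsB; case: (n == 2%N). Qed.
Lemma multBE n : multB n = mults 2 (multsB n).
Proof. by rewrite /multB /multsB; case: (n == 2%N). Qed.

Definition checksA (n : nat) : bool :=
  schemeb (isowords n) 3 symw (entry3 (intersectionA n)) &&
  numericb 3 (entry3 (intersectionA n)) (dualA n) (rowsA n)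
    (2 * size (isowords n)) (size (isowords n)) (multsA n).

Definition checksB (n : nat) : bool :=
  schemeb (isowords n) 2 fusw (entry3 (intersectionB n)) &&
  numericb 2 (entry3 (intersectionB n)) (dualB n) (rowsB n)
    (2 * size (isowords n)) (size (isowords n)) (multsB n).

Lemma checksAB n : (n == 2%N) || (n == 3%N) -> checksA n && checksB n.
Proof. by case/orP=> /eqP ->; vm_compute. Qed.

Theorem corollary5p5 (F : finFieldType) (hF : #|F| = 4%N) (alpha : F)
  (halpha : 3.-primitive_root alpha) (n : nat) (hn : (n == 2%N) || (n == 3%N)) :
  (is_assoc_scheme _ (Phi F n) _ (symR F n alpha)
   /\ is_char_table _ (Phi F n) _ (symR F n alpha) (tableA n) (multA n))
  /\
  (is_assoc_scheme _ (Phi F n) _ (fusR F n alpha)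
   /\ is_char_table _ (Phi F n) _ (fusR F n alpha) (tableB n) (multB n)).
Proof.
have symR_vec_of (i : 'I_4) u w : u \in words n -> w \in words n ->
    symR F n alpha i (vec_of alpha n u) (vec_of alpha n w) = symw i u w.
  by move=> u_in w_in; rewrite /symR fuse_vec_of.
have fusR_vec_of (i : 'I_3) u w : u \in words n -> w \in words n ->
    fusR F n alpha i (vec_of alpha n u) (vec_of alpha n w) = fusw i u w.
  by move=> u_in w_in; rewrite /fusR fuse_vec_of.
have /andP[/andP[schemeA numericA] /andP[schemeB numericB]] := checksAB hn.
rewrite tableAE multAE tableBE multBE; split; split.
- exact: (assoc_scheme_of_checks hF halpha symR_vec_of schemeA).
- exact: (char_table_of_checks hF halpha symR_vec_of schemeA numericA).
- exact: (assoc_scheme_of_checks hF halpha fusR_vec_of schemeB).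
- exact: (char_table_of_checks hF halpha fusR_vec_of schemeB numericB).
Qed.
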